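(* Let $X$ be a compact Hausdorff space and $G$ a second-countable compact group acting continuously on $X$, and let $\alpha\colon G\to\mathrm{Aut}(C(X))$, $\alpha_g(f)(x)=f(g^{-1}\cdot x)$, be the induced action. Assume that $(G,C(G),\mathtt{Lt})$ is weakly equivariantly semiprojective with respect to the class of commutative C*-algebras. Then $\alpha$ has the Rokhlin property if and only if there is a homeomorphism $\sigma\colon X/G\times G\to X$ with $g\cdot\sigma(Gx,h)=\sigma(Gx,gh)$ for all $g,h\in G$ and $x\in X$.
   Context: $\mathtt{Lt}_g(f)(h)=f(g^{-1}h)$. For a C*-algebra $C$ with continuous $G$-action: $C_\infty=\ell^\infty(\mathbb N,C)/c_0(\mathbb N,C)$ with quotient map $\kappa_C$, with coordinatewise induced actions. $(G,C(G),\mathtt{Lt})$ is weakly equivariantly semiprojective with respect to commutative C*-algebras if for every commutative C*-algebra $C$ with continuous $G$-action and every equivariant homomorphism $\varphi\colon C(G)\to C_\infty$ there is an equivariant homomorphism $\psi\colon C(G)\to\ell^\infty(\mathbb N,C)$ with $\kappa_C\circ\psi=\varphi$. Rokhlin property for an action $\alpha$ on a unital $A$: with $A$ embedded in $A_\infty$ as constant sequences, $\alpha^\infty$ coordinatewise on $\ell^\infty(\mathbb N,A)$, $\ell^\infty_\alpha(\mathbb N,A)$ the sequences $a$ with $g\mapsto\alpha^\infty_g(a)$ norm continuous, $A_{\infty,\alpha}=\kappa_A(\ell^\infty_\alpha(\mathbb N,A))$ with action $\alpha_\infty$: there is a unital homomorphism $\varphi\colon C(G)\to A_{\infty,\alpha}\cap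 A'$ with $\varphi\circ\mathtt{Lt}_g=(\alpha_\infty)_g\circ\varphi$ for all $g$. *)

From HB Require Import structures.
From mathcomp Require Import all_boot all_order all_algebra.
From mathcomp Require Import all_classical all_reals all_analysis.
From mathcomp Require Import complex generic_quotient.
From mathcomp Require Import Rstruct Rstruct_topology.
Set Implicit Arguments. Unset Strict Implicit. Unset Printing Implicit Defensive.
Import Order.TTheory GRing.Theory Num.Theory.
Local Open Scope ring_scope.
Local Open Scope classical_set_scope.
Local Open Scope quotient_scope.

Notation Rr := Rdefinitions.R.
Notation C := (Rr[i]).
Notation normc := (@ComplexField.Normc.normc Rr).

Definition ccont {T : topologicalType} (f : T -> C) : Prop :=
  forall (t0 : T) (e : Rr), 0 < e -> \forall t \near t0, normc (f t - f t0) < e.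

Record group_law (G : Type) := GroupLaw {
  gmul : G -> G -> G; ginv : G -> G; gone : G;
  gmulA : forall a b c, gmul a (gmul b c) = gmul (gmul a b) c;
  gmul1 : forall a, gmul gone a = a;
  gmulV : forall a, gmul (ginv a) a = gone }.

Definition compact_group (G : topologicalType) (L : group_law G) : Prop :=
  [/\ hausdorff_space G, compact [set: G],
      continuous (fun p : G * G => gmul L p.1 p.2) & continuous (ginv L)].

Record group_action (G : Type) (L : group_law G) (X : Type) := GroupAction {
  act : G -> X -> X;
  act1 : forall x, act (gone L) x = x;
  actM : forall g h x, act (gmul L g h) x = act g (act h x) }.

Section Orbits.
Variables (G : Type) (L : group_law G) (X : choiceType) (a : group_action L X).

Definition orbit_rel : rel X := fun x y => `[< exists g, act a g x = y >].

Lemma orbit_rel_refl : reflexive orbit_rel.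
Proof. by move=> x; apply/asboolP; exists (gone L); rewrite act1. Qed.

Lemma orbit_rel_sym : symmetric orbit_rel.
Proof.
have H x y : orbit_rel x y -> orbit_rel y x.
  move=> /asboolP [g <-]; apply/asboolP; exists (ginv L g).
  by rewrite -actM gmulV act1.
by move=> x y; apply/idP/idP; apply: H.
Qed.

Lemma orbit_rel_trans : transitive orbit_rel.
Proof.
move=> y x z /asboolP [g <-] /asboolP [h <-]; apply/asboolP.
by exists (gmul L h g); rewrite actM.
Qed.

Definition orbit_equiv : equiv_rel X :=
  EquivRel orbit_rel orbit_rel_refl orbit_rel_sym orbit_rel_trans.
End Orbits.

Definition orbit_space (G : Type) (L : group_law G) (X : topologicalType)
  (a : group_action L X) : topologicalType :=
  quotient_topology {eq_quot (orbit_equiv a)}.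

Definition homeomorphism (S T : topologicalType) (f : S -> T) : Prop :=
  continuous f /\ exists g : T -> S, [/\ continuous g, cancel f g & cancel g f].

Definition Lt (G : Type) (L : group_law G) (g : G) (f : G -> C) : G -> C :=
  fun h => f (gmul L (ginv L g) h).

Record cstar_alg := CstarAlg {
  ca :> Type;
  c0 : ca; cadd : ca -> ca -> ca; copp : ca -> ca; cmul : ca -> ca -> ca;
  cscale : C -> ca -> ca; cstar : ca -> ca; cnorm : ca -> Rr;
  caddA : forall x y z, cadd x (cadd y z) = cadd (cadd x y) z;
  caddC : forall x y, cadd x y = cadd y x;
  cadd0 : forall x, cadd c0 x = x;
  caddN : forall x, cadd (copp x) x = c0;
  cscaleA : forall z w x, cscale z (cscale w x) = cscale (z * w) x;
  cscale1 : forall x, cscale 1 x = x;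
  cscaleDr : forall z x y, cscale z (cadd x y) = cadd (cscale z x) (cscale z y);
  cscaleDl : forall z w x, cscale (z + w) x = cadd (cscale z x) (cscale w x);
  cmulA : forall x y z, cmul x (cmul y z) = cmul (cmul x y) z;
  cmulDl : forall x y z, cmul (cadd x y) z = cadd (cmul x z) (cmul y z);
  cmulDr : forall x y z, cmul x (cadd y z) = cadd (cmul x y) (cmul x z);
  cmulZl : forall z x y, cmul (cscale z x) y = cscale z (cmul x y);
  cmulZr : forall z x y, cmul x (cscale z y) = cscale z (cmul x y);
  cstarK : forall x, cstar (cstar x) = x;
  cstarD : forall x y, cstar (cadd x y) = cadd (cstar x) (cstar y);
  cstarZ : forall z x, cstar (cscale z x) = cscale (conjc z) (cstar x);
  cstarM : forall x y, cstar (cmul x y) = cmul (cstar y) (cstar x);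
  cnorm_eq0 : forall x, cnorm x = 0 <-> x = c0;
  cnormD : forall x y, cnorm (cadd x y) <= cnorm x + cnorm y;
  cnormZ : forall z x, cnorm (cscale z x) = normc z * cnorm x;
  cnormM : forall x y, cnorm (cmul x y) <= cnorm x * cnorm y;
  cnorm_cstar : forall x, cnorm (cmul (cstar x) x) = cnorm x ^+ 2;
  ccomplete : forall u : nat -> ca,
    (forall e : Rr, 0 < e -> exists N, forall m n, (N <= m)%N -> (N <= n)%N ->
        cnorm (cadd (u m) (copp (u n))) < e) ->
    exists l, forall e : Rr, 0 < e -> exists N, forall n, (N <= n)%N ->
        cnorm (cadd (u n) (copp l)) < e }.

Definition csub (A : cstar_alg) (x y : A) : A := cadd x (copp y).

Definition ccommutative (A : cstar_alg) : Prop :=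
  forall x y : A, cmul x y = cmul y x.

Definition is_star_endo (A : cstar_alg) (f : A -> A) : Prop :=
  [/\ forall x y, f (cadd x y) = cadd (f x) (f y),
      forall z x, f (cscale z x) = cscale z (f x),
      forall x y, f (cmul x y) = cmul (f x) (f y)
    & forall x, f (cstar x) = cstar (f x)].

Definition cstar_action (G : topologicalType) (L : group_law G) (A : cstar_alg)
  (beta : G -> A -> A) : Prop :=
  [/\ forall x, beta (gone L) x = x,
      forall g h x, beta (gmul L g h) x = beta g (beta h x),
      forall g, is_star_endo (beta g)
    & forall (x : A) (g0 : G) (e : Rr), 0 < e ->
        \forall g \near g0, cnorm (csub (beta g x) (beta g0 x)) < e].

Definition cbounded (A : cstar_alg) (u : nat -> A) : Prop :=
  exists M : Rr, forall n, cnorm (u n) <= M.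
Definition cnull (A : cstar_alg) (u : nat -> A) : Prop :=
  forall e : Rr, 0 < e -> exists N, forall n, (N <= n)%N -> cnorm (u n) < e.

(* An equivariant *-homomorphism  phi : C(G) -> A_infty = ell^infty/c_0,
   represented by a lift Phi : C(G) -> ell^infty(N,A) (kappa_A o Phi = phi);
   the homomorphism identities then hold modulo c_0. *)
Definition equiv_hom_to_Ainf (G : topologicalType) (L : group_law G)
  (A : cstar_alg) (beta : G -> A -> A) (Phi : (G -> C) -> nat -> A) : Prop :=
  forall f f' : G -> C, ccont f -> ccont f' ->
  cbounded (Phi f) /\
  cnull (fun n => csub (Phi (fun t => f t + f' t) n) (cadd (Phi f n) (Phi f' n))) /\
  (forall z : C, cnull (fun n => csub (Phi (fun t => z * f t) n) (cscale z (Phi f n)))) /\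
  cnull (fun n => csub (Phi (fun t => f t * f' t) n) (cmul (Phi f n) (Phi f' n))) /\
  cnull (fun n => csub (Phi (fun t => conjc (f t)) n) (cstar (Phi f n))) /\
  (forall g : G, cnull (fun n => csub (Phi (Lt L g f) n) (beta g (Phi f n)))).

Definition equiv_hom_to_linf (G : topologicalType) (L : group_law G)
  (A : cstar_alg) (beta : G -> A -> A) (Psi : (G -> C) -> nat -> A) : Prop :=
  forall f f' : G -> C, ccont f -> ccont f' ->
  cbounded (Psi f) /\
  (forall n, Psi (fun t => f t + f' t) n = cadd (Psi f n) (Psi f' n)) /\
  (forall (z : C) n, Psi (fun t => z * f t) n = cscale z (Psi f n)) /\
  (forall n, Psi (fun t => f t * f' t) n = cmul (Psi f n) (Psi f' n)) /\
  (forall n, Psi (fun t => conjc (f t)) n = cstar (Psi f n)) /\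
  (forall (g : G) n, Psi (Lt L g f) n = beta g (Psi f n)).

Definition weakly_equiv_semiprojective_comm (G : topologicalType)
  (L : group_law G) : Prop :=
  forall (A : cstar_alg), ccommutative A ->
  forall beta : G -> A -> A, cstar_action L beta ->
  forall Phi : (G -> C) -> nat -> A, equiv_hom_to_Ainf L beta Phi ->
  exists Psi : (G -> C) -> nat -> A, equiv_hom_to_linf L beta Psi /\
    forall f, ccont f -> cnull (fun n => csub (Psi f n) (Phi f n)).

Section Rokhlin.
Variables (G X : topologicalType) (L : group_law G) (a : group_action L X).

Definition alpha (g : G) (f : X -> C) : X -> C := fun x => f (act a (ginv L g) x).

Definition linf_CX (u : nat -> X -> C) : Prop :=
  (forall n, ccont (u n)) /\ exists M : Rr, forall n x, normc (u n x) <= M.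

Definition null_CX (u : nat -> X -> C) : Prop :=
  forall e : Rr, 0 < e -> exists N, forall n, (N <= n)%N -> forall x, normc (u n x) < e.

Definition alpha_cont (u : nat -> X -> C) : Prop :=
  forall (g0 : G) (e : Rr), 0 < e -> \forall g \near g0,
    forall n x, normc (alpha g (u n) x - alpha g0 (u n) x) < e.

Definition in_Ainf_alpha (u : nat -> X -> C) : Prop :=
  exists v, [/\ linf_CX v, alpha_cont v & null_CX (fun n x => v n x - u n x)].

Definition rokhlin : Prop :=
  exists Phi : (G -> C) -> nat -> X -> C,
  forall f f' : G -> C, ccont f -> ccont f' ->
  linf_CX (Phi f) /\ in_Ainf_alpha (Phi f) /\
  (* commutes with the constant sequences, i.e. lands in A' *)
  (forall b : X -> C, ccont b ->
     null_CX (fun n x => Phi f n x * b x - b x * Phi f n x)) /\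
  null_CX (fun n x => Phi (fun t => f t + f' t) n x - (Phi f n x + Phi f' n x)) /\
  (forall z : C, null_CX (fun n x => Phi (fun t => z * f t) n x - z * Phi f n x)) /\
  null_CX (fun n x => Phi (fun t => f t * f' t) n x - Phi f n x * Phi f' n x) /\
  null_CX (fun n x => Phi (fun t => conjc (f t)) n x - conjc (Phi f n x)) /\
  null_CX (fun n x => Phi (fun _ => 1) n x - 1) /\
  (forall g : G, null_CX (fun n x => Phi (Lt L g f) n x - alpha g (Phi f n) x)).
End Rokhlin.

From HB Require Import structures.
From mathcomp Require Import all_boot all_order all_algebra.
From mathcomp Require Import all_classical all_reals all_analysis.
From mathcomp Require Import complex generic_quotient.
From mathcomp Require Import Rstruct Rstruct_topology.
From mathcomp Require Import ring lra.
Set Implicit Arguments.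
Unset Strict Implicit.
Unset Printing Implicit Defensive.
Import Order.TTheory GRing.Theory Num.Theory.
Local Open Scope classical_set_scope.
Local Open Scope quotient_scope.
Local Open Scope complex_scope.
Local Open Scope ring_scope.

(* A Rokhlin map is an approximately multiplicative, approximately equivariant
   sequence of maps C(G) -> C(X), C(X) being a commutative C*-algebra for the
   sup norm.  Weak equivariant semiprojectivity lifts it to a sequence of exact
   equivariant *-homomorphisms, one of which is unital since it sends 1 to a
   projection close to 1.  Composed with evaluation at x it is a character of
   C(G), i.e. evaluation at a point th(x) of G, and th : X -> G is continuous
   with th(g.x) = g th(x).  Such a map trivializes X: x |-> (Gx, th x) is a
   homeomorphism onto X/G * G, with inverse (Gx, h) |-> h th(x)^-1 . x.
   Conversely th := snd o sigma^-1 is continuous and equivariant, and the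
   constant sequence f |-> f o th is an exact Rokhlin map. *)
Section ComplexModulus.
Implicit Types z w : C.

Lemma normc_ge0 z : 0 <= normc z.
Proof. exact: (normr_ge0 (z : Rcomplex Rr)). Qed.

Lemma normcB z w : normc (z - w) = normc (w - z).
Proof. exact: (distrC (z : Rcomplex Rr) w). Qed.

Lemma normc_conj z : normc (conjc z) = normc z.
Proof. by case: z => a b; rewrite /= sqrrN. Qed.

Lemma normc_real (r : Rr) : normc r%:C = `|r|.
Proof. by rewrite /= expr0n /= addr0 sqrtr_sqr. Qed.

Lemma normc_Re z : `|complex.Re z| <= normc z.
Proof. by case: z => a b /=; rewrite -sqrtr_sqr ler_wsqrtr // lerDl sqr_ge0. Qed.

Lemma normc_Im z : `|complex.Im z| <= normc z.
Proof. by case: z => a b /=; rewrite -sqrtr_sqr ler_wsqrtr // lerDr sqr_ge0. Qed.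

Lemma normc_le_ReIm z : normc z <= `|complex.Re z| + `|complex.Im z|.
Proof.
case: z => a b /=; rewrite -[leRHS]ger0_norm ?addr_ge0 // -sqrtr_sqr ler_wsqrtr //.
rewrite sqrrD -(real_normK (num_real a)) -(real_normK (num_real b)).
by rewrite addrAC lerDl mulrn_wge0 // mulr_ge0.
Qed.

Lemma mulc_conj z : z * conjc z = (normc z ^+ 2)%:C.
Proof.
case: z => a b /=; rewrite sqr_sqrtr ?addr_ge0 ?sqr_ge0 //.
by apply/eqP; rewrite eq_complex /=; apply/andP; split; apply/eqP; ring.
Qed.

Lemma normc_sub_tri z w (u : C) : normc (z - w) <= normc (z - u) + normc (w - u).
Proof.
rewrite [normc (w - u)]normcB; have := le_normcD (z - u) (u - w).
by rewrite addrA subrK.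
Qed.

End ComplexModulus.

(* The reals as a [realType], so that the normed-module continuity lemmas apply. *)
Local Notation Rreal := (Rr : realType).

Section ComplexContinuity.
Context {T : topologicalType}.
Implicit Types f g : T -> C.

Lemma ccontP f :
  ccont f <-> continuous (fun t => complex.Re (f t)) /\ continuous (fun t => complex.Im (f t)).
Proof.
split=> [cf|[cRe cIm] t0 e e0].
  split=> t0; apply/(@cvgrPdist_lt _ Rreal) => e e0;
    apply: filterS (cf t0 e e0) => t; apply: le_lt_trans;
    case: (f t0) (f t) => a b [c d]; rewrite distrC.
  - exact: (normc_Re ((c - a) +i* (d - b))).
  - exact: (normc_Im ((c - a) +i* (d - b))).
have e2 : 0 < e / 2 by rewrite divr_gt0.
have nRe : \forall t \near t0, `|complex.Re (f t0) - complex.Re (f t)| < e / 2.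
  exact: (@cvgrPdist_lt _ Rreal _ _ _ _ _).1 (cRe t0) _ e2.
have nIm : \forall t \near t0, `|complex.Im (f t0) - complex.Im (f t)| < e / 2.
  exact: (@cvgrPdist_lt _ Rreal _ _ _ _ _).1 (cIm t0) _ e2.
apply: filterS2 nRe nIm => t; case: (f t0) (f t) => a b [c d] /= hRe hIm.
apply: le_lt_trans (normc_le_ReIm ((c - a) +i* (d - b))) _ => /=.
by rewrite [e]splitr ltrD // distrC.
Qed.

Lemma ccont_cst (c : C) : ccont (fun _ : T => c).
Proof. by move=> t0 e e0; apply: nearW => t; rewrite subrr ComplexField.Normc.normc0. Qed.

Lemma ccontD f g : ccont f -> ccont g -> ccont (fun t => f t + g t).
Proof.
move=> /ccontP[fRe fIm] /ccontP[gRe gIm]; apply/ccontP; split=> t.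
  have -> : (fun s => complex.Re (f s + g s)) = (fun s => complex.Re (f s) + complex.Re (g s)).
    by apply/funext => s; case: (f s) (g s) => ? ? [].
  exact: (@continuousD _ Rreal _ _ _ _ (fRe t) (gRe t)).
have -> : (fun s => complex.Im (f s + g s)) = (fun s => complex.Im (f s) + complex.Im (g s)).
  by apply/funext => s; case: (f s) (g s) => ? ? [].
exact: (@continuousD _ Rreal _ _ _ _ (fIm t) (gIm t)).
Qed.

Lemma ccontM f g : ccont f -> ccont g -> ccont (fun t => f t * g t).
Proof.
move=> /ccontP[fRe fIm] /ccontP[gRe gIm]; apply/ccontP; split=> t.
  have -> : (fun s => complex.Re (f s * g s)) =
      (fun s => complex.Re (f s) * complex.Re (g s) - complex.Im (f s) * complex.Im (g s)).
    by apply/funext => s; case: (f s) (g s) => ? ? [].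
  exact: (@continuousB _ Rreal _ _ _ _
    (@continuousM Rreal _ _ _ _ (fRe t) (gRe t)) (@continuousM Rreal _ _ _ _ (fIm t) (gIm t))).
have -> : (fun s => complex.Im (f s * g s)) =
    (fun s => complex.Re (f s) * complex.Im (g s) + complex.Im (f s) * complex.Re (g s)).
  by apply/funext => s; case: (f s) (g s) => ? ? [].
exact: (@continuousD _ Rreal _ _ _ _
  (@continuousM Rreal _ _ _ _ (fRe t) (gIm t)) (@continuousM Rreal _ _ _ _ (fIm t) (gRe t))).
Qed.

Lemma ccontJ f : ccont f -> ccont (fun t => conjc (f t)).
Proof.
move=> /ccontP[fRe fIm]; apply/ccontP; split.
  by have -> : (fun s => complex.Re (conjc (f s))) = (fun s => complex.Re (f s))
    by apply/funext => s; case: (f s).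
have -> : (fun s => complex.Im (conjc (f s))) = (fun s => - complex.Im (f s)).
  by apply/funext => s; case: (f s).
by move=> t; exact: (@continuousN _ Rreal _ _ _ (fIm t)).
Qed.

Lemma ccontZ (z : C) f : ccont f -> ccont (fun t => z * f t).
Proof. exact/ccontM/ccont_cst. Qed.

Lemma ccont_real (r : T -> Rr) : continuous r -> ccont (fun t => (r t)%:C).
Proof. by move=> cr; apply/ccontP; split=> //= t; exact: cvg_cst. Qed.

Lemma continuous_normc f : ccont f -> continuous (fun t => normc (f t)).
Proof.
move=> cf t0; apply/(@cvgrPdist_lt _ Rreal) => e e0.
apply: filterS (cf t0 e e0) => t; apply: le_lt_trans.
have := le_normcD (f t - f t0) (f t0); have := le_normcD (f t0 - f t) (f t).
rewrite !subrK [normc (f t0 - _)]normcB => ? ?.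
by rewrite ler_norml; apply/andP; split; lra.
Qed.

Lemma ccont_comp (S : topologicalType) (h : S -> T) f :
  continuous h -> ccont f -> ccont (fun s => f (h s)).
Proof. by move=> ch cf s0 e e0; exact: ch s0 _ (cf (h s0) e e0). Qed.

End ComplexContinuity.

Lemma ccont_bounded {T : topologicalType} {f : T -> C} :
  compact [set: T] -> ccont f -> exists M : Rr, forall t, normc (f t) <= M.
Proof.
move=> cT /continuous_normc cf.
have := continuous_compact (continuous_subspaceT cf) cT.
move=> /(@compact_bounded Rreal Rreal) [M [_ hM]].
have M1 : M < M + 1 by rewrite ltrDl.
exists (M + 1) => t; have := hM _ M1 (normc (f t)) (ex_intro2 _ _ t I erefl).
by rewrite /= ger0_norm ?normc_ge0.
Qed.

Lemma ccont_unif_compact {Y P : topologicalType} {h : Y * P -> C} :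
  compact [set: Y] -> ccont h -> forall (p0 : P) (e : Rr), 0 < e ->
  \forall p \near p0, forall y, normc (h (y, p) - h (y, p0)) < e.
Proof.
move=> cY ch p0 e e0.
have e2 : 0 < e / 2 by rewrite divr_gt0.
suff : \forall p \near p0, [set: Y] `<=` (fun y => normc (h (y, p) - h (y, p0)) < e).
  by apply: filterS => p hp y; exact: hp.
apply: ((compact_near_coveringP _).1 cY P (nbhs p0)
  (fun p y => normc (h (y, p) - h (y, p0)) < e)) => y _.
have [[A B] /= [nA nB] sAB] := ch (y, p0) _ e2.
exists (A, B) => // -[y' p] /= [Ay' Bp].
have h1 := sAB (y', p) (conj Ay' Bp); have h2 := sAB (y', p0) (conj Ay' (nbhs_singleton nB)).
apply: le_lt_trans (normc_sub_tri _ _ (h (y, p0))) _.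
by rewrite [e]splitr ltrD.
Qed.

Lemma continuous_pair {S U V : topologicalType} (f : S -> U) (g : S -> V) :
  continuous f -> continuous g -> continuous (fun s => (f s, g s)).
Proof. by move=> cf cg s; apply: cvg_pair; [exact: cf | exact: cg]. Qed.

Lemma continuous_comp2 {S U V W : topologicalType} (op : U * V -> W) (f : S -> U) (g : S -> V) :
  continuous op -> continuous f -> continuous g -> continuous (fun s => op (f s, g s)).
Proof.
move=> cop cf cg s; apply: (continuous_comp (f := fun s => (f s, g s))) (cop _).
exact: continuous_pair.
Qed.

Section GroupLaws.
Variables (G : Type) (L : group_law G).
Local Notation "g * h" := (gmul L g h).
Local Notation "g ^-1" := (ginv L g).
Local Notation "1" := (gone L).

Lemma gmulrV g : g * g^-1 = 1.
Proof.
have -> : g * g^-1 = ((g^-1)^-1 * g^-1) * (g * g^-1) by rewrite gmulV gmul1.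
by rewrite -gmulA (gmulA L g^-1 g g^-1) gmulV gmul1 gmulV.
Qed.

Lemma gmulr1 g : g * 1 = g.
Proof. by rewrite -(gmulV L g) gmulA gmulrV gmul1. Qed.

Lemma ginvK g : (g^-1)^-1 = g.
Proof. by rewrite -[LHS]gmulr1 -(gmulV L g) gmulA gmulV gmul1. Qed.

Lemma ginvM g h : (g * h)^-1 = h^-1 * g^-1.
Proof.
have hgK : (h^-1 * g^-1) * (g * h) = 1.
  by rewrite -gmulA (gmulA L g^-1) gmulV gmul1 gmulV.
by rewrite -[LHS](gmul1 L) -hgK -gmulA gmulrV gmulr1.
Qed.

Lemma ginv1 : 1^-1 = 1.
Proof. by rewrite -[LHS](gmul1 L) gmulrV. Qed.

Definition left_action : group_action L G :=
  @GroupAction G L G (gmul L) (gmul1 L) (fun g h k => esym (gmulA L g h k)).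

Variables (X : Type) (a : group_action L X).

Lemma actK g x : act a g^-1 (act a g x) = x.
Proof. by rewrite -actM gmulV act1. Qed.

Lemma actKV g x : act a g (act a g^-1 x) = x.
Proof. by rewrite -actM gmulrV act1. Qed.

End GroupLaws.

Lemma cauchy_real_cvg (u : nat -> Rr) :
  (forall e : Rr, 0 < e ->
    exists N, forall m n, (N <= m)%N -> (N <= n)%N -> `|u m - u n| < e) ->
  exists l : Rr, forall e : Rr, 0 < e -> exists N, forall n, (N <= n)%N -> `|u n - l| < e.
Proof.
move=> cu; have : cvg (u @ \oo).
  apply/(@cauchy_cvgP Rreal)/cauchy_exP => e /cu[N hN].
  by exists (u N), N => // n /= Nn; rewrite /ball /= hN.
move=> /(@cvgrPdist_lt _ Rreal) cvgu; exists (lim (u @ \oo)) => e /cvgu[N _ hN].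
by exists N => n Nn; rewrite distrC hN.
Qed.

Lemma cauchy_complex_cvg (u : nat -> C) :
  (forall e : Rr, 0 < e ->
    exists N, forall m n, (N <= m)%N -> (N <= n)%N -> normc (u m - u n) < e) ->
  exists l : C, forall e : Rr, 0 < e -> exists N, forall n, (N <= n)%N -> normc (u n - l) < e.
Proof.
move=> cu.
have [a cvga] : exists a, forall e : Rr, 0 < e ->
    exists N, forall n, (N <= n)%N -> `|complex.Re (u n) - a| < e.
  apply: cauchy_real_cvg => e /cu[N hN]; exists N => m n Nm Nn.
  apply: le_lt_trans (hN _ _ Nm Nn); case: (u m) (u n) => x y [z w].
  exact: (normc_Re ((x - z) +i* (y - w))).
have [b cvgb] : exists b, forall e : Rr, 0 < e ->
    exists N, forall n, (N <= n)%N -> `|complex.Im (u n) - b| < e.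
  apply: cauchy_real_cvg => e /cu[N hN]; exists N => m n Nm Nn.
  apply: le_lt_trans (hN _ _ Nm Nn); case: (u m) (u n) => x y [z w].
  exact: (normc_Im ((x - z) +i* (y - w))).
exists (a +i* b) => e e0; have e2 : 0 < e / 2 by rewrite divr_gt0.
have [[Na hNa] [Nb hNb]] := (cvga _ e2, cvgb _ e2).
exists (maxn Na Nb) => n; rewrite geq_max => /andP[/hNa ha /hNb hb].
apply: le_lt_trans (normc_le_ReIm _) _; move: ha hb; case: (u n) => c d /= ha hb.
by rewrite [e]splitr ltrD.
Qed.

Record cfun (X : topologicalType) := CFun { cfun_val :> X -> C; cfunP : ccont cfun_val }.
Arguments cfunP {X} c.

Section ContinuousFunctions.
Variables (X : topologicalType) (cX : compact [set: X]).
Implicit Types u v : cfun X.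

Lemma cfunE u v : (forall x, u x = v x) -> u = v.
Proof.
case: u v => u cu [v cv] /= /funext uv; subst v.
by congr CFun; exact: Prop_irrelevance.
Qed.

Definition cf_cst (c : C) : cfun X := CFun (ccont_cst c).
Definition cfadd u v : cfun X := CFun (ccontD (cfunP u) (cfunP v)).
Definition cfopp u : cfun X := CFun (ccontZ (-1) (cfunP u)).
Definition cfmul u v : cfun X := CFun (ccontM (cfunP u) (cfunP v)).
Definition cfscale (z : C) u : cfun X := CFun (ccontZ z (cfunP u)).
Definition cfstar u : cfun X := CFun (ccontJ (cfunP u)).
(* [sup set0 = 0]: hence the hypothesis [0 <= M] in [cfnorm_le], for empty [X]. *)
Definition cfnorm u : Rr := sup (range (fun x => normc (u x))).

Lemma cfnorm_ub u x : normc (u x) <= cfnorm u.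
Proof.
have [M hM] := ccont_bounded cX (cfunP u).
by apply: ub_le_sup; [exists M => _ [y _ <-] | exists x].
Qed.

Lemma cfnorm_le u M : 0 <= M -> (forall x, normc (u x) <= M) -> cfnorm u <= M.
Proof.
move=> M0 uM; have [ne|/nonemptyPn empty] := pselect (range (fun x => normc (u x)) !=set0).
  by apply: ge_sup ne _ => _ [x _ <-].
by rewrite /cfnorm empty sup0.
Qed.

Lemma cfnorm_ge0 u : 0 <= cfnorm u.
Proof.
have [[_ [x _ _]]|/nonemptyPn empty] := pselect (range (fun x => normc (u x)) !=set0).
  exact: le_trans (normc_ge0 _) (cfnorm_ub u x).
by rewrite /cfnorm empty sup0.
Qed.

Lemma cfnorm_eq0 u : cfnorm u = 0 <-> u = cf_cst 0.
Proof.
split=> [u0|->]; last first.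
  by apply/eqP; rewrite eq_le cfnorm_ge0 cfnorm_le // => x; rewrite ComplexField.Normc.normc0.
apply: cfunE => x; apply: ComplexField.Normc.eq0_normc.
by apply/eqP; rewrite eq_le normc_ge0 -u0 cfnorm_ub.
Qed.

Lemma cfnormD u v : cfnorm (cfadd u v) <= cfnorm u + cfnorm v.
Proof.
apply: cfnorm_le => [|x]; first by rewrite addr_ge0 ?cfnorm_ge0.
by apply: le_trans (le_normcD _ _) _; rewrite lerD ?cfnorm_ub.
Qed.

Lemma cfnormZ z u : cfnorm (cfscale z u) = normc z * cfnorm u.
Proof.
apply/eqP; rewrite eq_le cfnorm_le ?mulr_ge0 ?normc_ge0 ?cfnorm_ge0 //=; last first.
  by move=> x; rewrite ComplexField.Normc.normcM ler_wpM2l ?normc_ge0 ?cfnorm_ub.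
have [->|z0] := eqVneq z 0; first by rewrite ComplexField.Normc.normc0 mul0r cfnorm_ge0.
have nz : 0 < normc z.
  by rewrite lt_def normc_ge0 andbT; apply: contra z0 => /eqP/ComplexField.Normc.eq0_normc ->.
rewrite -ler_pdivlMl // cfnorm_le // => [|x].
  by rewrite mulr_ge0 ?invr_ge0 ?normc_ge0 ?cfnorm_ge0.
by rewrite ler_pdivlMl // -ComplexField.Normc.normcM (cfnorm_ub (cfscale z u)).
Qed.

Lemma cfnormM u v : cfnorm (cfmul u v) <= cfnorm u * cfnorm v.
Proof.
apply: cfnorm_le => [|x]; first by rewrite mulr_ge0 ?cfnorm_ge0.
by rewrite /= ComplexField.Normc.normcM ler_pM ?normc_ge0 ?cfnorm_ub.
Qed.

Lemma cfnorm_cstar u : cfnorm (cfmul (cfstar u) u) = cfnorm u ^+ 2.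
Proof.
have uuE x : normc (cfmul (cfstar u) u x) = normc (u x) ^+ 2.
  by rewrite /= ComplexField.Normc.normcM normc_conj expr2.
apply/eqP; rewrite eq_le cfnorm_le ?sqr_ge0 //=; last first.
  by move=> x; rewrite uuE lerXn2r ?nnegrE ?normc_ge0 ?cfnorm_ge0 ?cfnorm_ub.
set N := cfnorm (cfmul _ _); have N0 : 0 <= N := cfnorm_ge0 _.
have : cfnorm u <= Num.sqrt N.
  apply: cfnorm_le => [|x]; first exact: sqrtr_ge0.
  by rewrite -[normc _]ger0_norm ?normc_ge0 // -sqrtr_sqr ler_wsqrtr // -uuE cfnorm_ub.
by move=> uN; rewrite -(sqr_sqrtr N0) lerXn2r ?nnegrE ?cfnorm_ge0 ?sqrtr_ge0.
Qed.

Lemma cfnorm_lt u (e : Rr) : 0 < e -> (forall x, normc (u x) <= e / 2) -> cfnorm u < e.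
Proof.
move=> e0 ue; apply: le_lt_trans (cfnorm_le _ ue) _; first by rewrite divr_ge0 ?ltW.
by rewrite ltr_pdivrMr // ltr_pMr // ltr1n.
Qed.

Lemma cfsubE u v x : cfadd u (cfopp v) x = u x - v x.
Proof. by rewrite /= mulN1r. Qed.

Lemma ccont_unif_lim (w : nat -> cfun X) (l : X -> C) :
  (forall e : Rr, 0 < e -> exists n, forall x, normc (w n x - l x) < e) -> ccont l.
Proof.
move=> wl x0 e e0; have e3 : 0 < e / 3 by rewrite divr_gt0.
have [n hn] := wl _ e3; apply: filterS (cfunP (w n) x0 _ e3) => x wx.
have t1 := normc_sub_tri (l x) (l x0) (w n x).
have t2 := normc_sub_tri (l x0) (w n x) (w n x0).
rewrite [normc (l x - w n x)]normcB in t1; rewrite [normc (l x0 - w n x0)]normcB in t2.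
have := hn x; have := hn x0; lra.
Qed.

Lemma cfun_complete (w : nat -> cfun X) :
  (forall e : Rr, 0 < e -> exists N, forall m n, (N <= m)%N -> (N <= n)%N ->
      cfnorm (cfadd (w m) (cfopp (w n))) < e) ->
  exists l, forall e : Rr, 0 < e -> exists N, forall n, (N <= n)%N ->
      cfnorm (cfadd (w n) (cfopp l)) < e.
Proof.
move=> cw.
have [l wl] : exists l : X -> C, forall x e, 0 < e ->
    exists N, forall n, (N <= n)%N -> normc (w n x - l x) < e.
  suff: forall x, exists lx, forall e, 0 < e ->
    exists N, forall n, (N <= n)%N -> normc (w n x - lx) < e.
    by move/choice=> [l wl]; exists l.
  move=> x; apply: cauchy_complex_cvg => e /cw[N hN]; exists N => m n Nm Nn.
  by rewrite -cfsubE (le_lt_trans (cfnorm_ub _ x) (hN _ _ Nm Nn)).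
have unif e : 0 < e -> exists N, forall n, (N <= n)%N -> forall x, normc (w n x - l x) <= e.
  move=> e0; have e2 : 0 < e / 2 by rewrite divr_gt0.
  have [N hN] := cw _ e2; exists N => n Nn x; have [Nx hNx] := wl x _ e2.
  pose m := maxn N Nx; have := hNx m (leq_maxr _ _).
  have := le_lt_trans (cfnorm_ub _ x) (hN n m Nn (leq_maxl _ _)); rewrite cfsubE.
  have := normc_sub_tri (w n x) (l x) (w m x); rewrite (normcB (l x)).
  rewrite [e]splitr; lra.
have cl : ccont l.
  apply: (ccont_unif_lim (w := w)) => e e0.
  have [N hN] := unif _ (divr_gt0 e0 (ltr0n _ 2)).
  exists N => x; apply: le_lt_trans (hN N (leqnn N) x) _.
  by rewrite ltr_pdivrMr // ltr_pMr // ltr1n.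
exists (CFun cl) => e e0; have [N hN] := unif _ (divr_gt0 e0 (ltr0n _ 2)).
by exists N => n Nn; apply: cfnorm_lt => // x; rewrite cfsubE; exact: hN.
Qed.

Definition cfun_cstar_alg : cstar_alg.
Proof.
refine (@CstarAlg (cfun X) (cf_cst 0) cfadd cfopp cfmul cfscale cfstar cfnorm
  _ _ _ _ _ _ _ _ _ _ _ _ _ _ _ _ _
  cfnorm_eq0 cfnormD cfnormZ cfnormM cfnorm_cstar cfun_complete);
  by move=> *; apply: cfunE => x /=; rewrite ?rmorphD ?rmorphM ?conjcK; ring.
Defined.

End ContinuousFunctions.
Arguments cfun_cstar_alg {X} cX.

Lemma cnull_cfun (X : topologicalType) (cX : compact [set: X])
    (w : nat -> cfun_cstar_alg cX) (u : nat -> X -> C) :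
  null_CX u -> (forall n x, w n x = u n x) -> cnull (A := cfun_cstar_alg cX) w.
Proof.
move=> u0 wu e e0; have [N hN] := u0 _ (divr_gt0 e0 (ltr0n _ 2)).
by exists N => n Nn; apply: cfnorm_lt => // x; rewrite wu; exact/ltW/hN.
Qed.

Section InducedAction.
Context {G X : topologicalType} {L : group_law G} {a : group_action L X}.
Hypotheses (cGrp : compact_group L) (cX : compact [set: X])
  (cact : continuous (fun p : G * X => act a p.1 p.2)).

Lemma continuous_ginv : continuous (ginv L).
Proof. by case: cGrp. Qed.

Lemma continuous_act_inv : continuous (fun p : X * G => act a (ginv L p.2) p.1).
Proof.
apply: (continuous_comp2 (f := fun p : X * G => ginv L p.2) (g := fst) cact) => p.
  by apply: (continuous_comp (f := snd)); [exact: cvg_snd | exact: continuous_ginv].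
exact: cvg_fst.
Qed.

Lemma continuous_act g : continuous (act a g).
Proof.
have := continuous_comp2 (f := fun=> g) (g := id) cact.
by apply=> x; [exact: cvg_cst | exact: cvg_id].
Qed.

Lemma ccont_alpha g (u : X -> C) (cu : ccont u) : ccont (alpha a g u).
Proof. exact: ccont_comp (continuous_act (g := ginv L g)) cu. Qed.

Definition cfun_alpha (g : G) (u : cfun X) : cfun X :=
  CFun (ccont_alpha g (cfunP u)).

Lemma cfun_alpha_action : cstar_action L (A := cfun_cstar_alg cX) cfun_alpha.
Proof.
split=> [u|g h u|g|u g0 e e0]; first by apply: cfunE => x; rewrite /= /alpha ginv1 act1.
- by apply: cfunE => x; rewrite /= /alpha ginvM actM.
- by split=> *; apply: cfunE.
have e2 : 0 < e / 2 by rewrite divr_gt0.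
have := ccont_unif_compact cX (ccont_comp continuous_act_inv (cfunP u)) g0 e2.
by apply: filterS => g ug; apply: cfnorm_lt => // x; rewrite cfsubE; exact/ltW/ug.
Qed.

Lemma cfun_cstar_alg_comm : ccommutative (cfun_cstar_alg cX).
Proof. by move=> u v; apply: cfunE => x /=; rewrite mulrC. Qed.

End InducedAction.

Lemma ccont_Lt (G : topologicalType) (L : group_law G) g (f : G -> C) :
  compact_group L -> ccont f -> ccont (Lt L g f).
Proof. by case=> _ _ cmul _; exact: (@ccont_alpha G G L (left_action L) cmul g f). Qed.

Definition is_character (G : topologicalType) (chi : (G -> C) -> C) : Prop :=
  [/\ forall f f', ccont f -> ccont f' -> chi (fun t => f t + f' t) = chi f + chi f',
      forall z f, ccont f -> chi (fun t => z * f t) = z * chi f,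
      forall f f', ccont f -> ccont f' -> chi (fun t => f t * f' t) = chi f * chi f',
      forall f, ccont f -> chi (fun t => conjc (f t)) = conjc (chi f)
    & chi (fun _ => 1) = 1].

Lemma idempotent_near1 (p : C) : p * p = p -> normc (p - 1) < 1 -> p = 1.
Proof.
move=> pp p1; have : p * (p - 1) = 0 by rewrite mulrBr mulr1 pp subrr.
move/eqP; rewrite mulf_eq0 subr_eq0 => /orP[/eqP p0|/eqP //].
by move: p1; rewrite p0 sub0r normcN ComplexField.Normc.normc1 ltxx.
Qed.

Section RokhlinLift.
Context {G X : topologicalType} {L : group_law G} {a : group_action L X}.
Hypotheses (cGrp : compact_group L) (cX : compact [set: X])
  (cact : continuous (fun p : G * X => act a p.1 p.2)).

Local Notation CX := (cfun_cstar_alg cX).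
Local Notation beta := (cfun_alpha cact).

Lemma rokhlin_hom_to_Ainf : rokhlin a ->
  exists Phi : (G -> C) -> nat -> CX, equiv_hom_to_Ainf L (A := CX) beta Phi /\
    null_CX (fun n x => Phi (fun _ => 1) n x - 1).
Proof.
move=> [Phi hPhi].
(* [Phi f n] is continuous only for continuous [f]; elsewhere take the value 0. *)
pose Phi' f n : CX := if pselect (ccont (Phi f n)) is left p then CFun p else cf_cst X 0.
have Phi'E f n : ccont f -> Phi' f n = Phi f n :> (X -> C).
  move=> cf; rewrite /Phi'; case: pselect => // -[].
  by have [[]] := hPhi f f cf cf.
exists Phi'; split=> [f f' cf cf'|]; last first.
  have c1 : ccont (fun _ : G => 1 : C) := ccont_cst 1.
  have [_ [_ [_ [_ [_ [_ [_ [h1 _]]]]]]]] := hPhi _ _ c1 c1.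
  by move=> e /h1[N hN]; exists N => n Nn x; rewrite Phi'E //; exact: hN.
have [[_ [M hM]] [_ [_ [hD [hZ [hM' [hJ [_ hE]]]]]]]] := hPhi f f' cf cf'.
have cfD := ccontD cf cf'; have cfM := ccontM cf cf'; have cfJ := ccontJ cf.
split.
  exists (Num.max M 0) => n; apply: cfnorm_le => [|x]; first by rewrite le_max lexx orbT.
  by rewrite Phi'E // (le_trans (hM n x)) // le_max lexx.
split; first by apply: (cnull_cfun (cX := cX) hD) => n x; rewrite cfsubE /= !Phi'E.
split.
  move=> z; apply: (cnull_cfun (cX := cX) (hZ z)) => n x.
  by rewrite cfsubE /= !Phi'E //; exact: ccontZ.
split; first by apply: (cnull_cfun (cX := cX) hM') => n x; rewrite cfsubE /= !Phi'E.
split; first by apply: (cnull_cfun (cX := cX) hJ) => n x; rewrite cfsubE /= !Phi'E.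
move=> g; apply: (cnull_cfun (cX := cX) (hE g)) => n x.
by rewrite cfsubE /= !Phi'E //; exact: ccont_Lt.
Qed.

Lemma rokhlin_equivariant_characters :
  weakly_equiv_semiprojective_comm L -> rokhlin a ->
  exists psi : (G -> C) -> X -> C,
  [/\ forall f, ccont f -> ccont (psi f),
      forall x, is_character (fun f => psi f x)
    & forall g f x, ccont f -> psi (Lt L g f) x = psi f (act a (ginv L g) x)].
Proof.
move=> wsp /rokhlin_hom_to_Ainf[Phi [hPhi Phi1]].
have [Psi [hPsi PsiPhi]] :=
  wsp CX (cfun_cstar_alg_comm (cX := cX)) beta (cfun_alpha_action cGrp cX cact) Phi hPhi.
have c1 : ccont (fun _ : G => 1 : C) := ccont_cst 1.
have half : (0 : Rr) < 1 / 2 by rewrite divr_gt0.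
have [[N1 hN1] [N2 hN2]] := (Phi1 _ half, PsiPhi _ c1 _ half).
pose n := maxn N1 N2.
(* [Psi 1 n] is a projection of C(X) within 1 of the unit. *)
have Psi1 x : Psi (fun _ => 1) n x = 1.
  apply: idempotent_near1.
    have [_ [_ [_ [hM _]]]] := hPsi _ _ c1 c1.
    have := congr1 (fun w : CX => w x) (hM n).
    by rewrite (_ : (fun _ => 1 * 1) = (fun _ => 1)) //; apply/funext => t; rewrite mulr1.
  have := le_lt_trans (cfnorm_ub cX _ x) (hN2 n (leq_maxr _ _)); rewrite cfsubE.
  have := normc_sub_tri (Psi (fun _ => 1) n x) 1 (Phi (fun _ => 1) n x).
  by have := hN1 n (leq_maxl _ _) x; rewrite [normc (1 - _)]normcB; lra.
exists (fun f x => Psi f n x); split=> [f _|x|g f x cf]; first exact: cfunP.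
  split=> [f f' cf cf'|z f cf|f f' cf cf'|f cf|//].
  - by have [_ [-> _]] := hPsi f f' cf cf'.
  - by have [_ [_ [-> _]]] := hPsi f f cf cf.
  - by have [_ [_ [_ [-> _]]]] := hPsi f f' cf cf'.
  - by have [_ [_ [_ [_ [-> _]]]]] := hPsi f f cf cf.
by have [_ [_ [_ [_ [_ ->]]]]] := hPsi f f cf cf.
Qed.

End RokhlinLift.

Section Characters.
Context {G : topologicalType}.
Variable chi : (G -> C) -> C.
Hypothesis chiP : is_character chi.

Lemma character_cst (c : C) : chi (fun _ => c) = c.
Proof.
have [_ chiZ _ _ chi1] := chiP.
have -> : (fun _ : G => c) = (fun t => c * (fun _ => 1) t) by apply/funext => t; rewrite mulr1.
by rewrite chiZ ?chi1 ?mulr1 //; exact: ccont_cst.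
Qed.

Lemma character_ker_small h : ccont h -> chi h = 0 ->
  forall e : Rr, 0 < e -> exists t, normc (h t) < e.
Proof.
(* Otherwise h h^* >= e^2 is invertible in C(G), and chi 1 = 0. *)
move=> ch chih e e0; apply: contrapT => /forallNP hbig.
have he t : e <= normc (h t) by rewrite leNgt; apply/negP; exact: hbig.
have n0 t : normc (h t) ^+ 2 != 0 by rewrite sqrf_eq0 gt_eqF // (lt_le_trans e0).
have cinv : continuous (fun t => (normc (h t) ^+ 2)^-1).
  move=> t; apply: (@continuousV Rreal _ (fun t => normc (h t) ^+ 2) t (n0 t)).
  by apply: continuousM; exact: continuous_normc.
have [_ _ chiM chiJ _] := chiP.
have chhJ : chi (fun t => h t * conjc (h t)) = 0.
  by rewrite chiM ?chih ?mul0r //; exact: ccontJ.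
have := chiM _ _ (ccontM ch (ccontJ ch)) (ccont_real cinv); rewrite chhJ mul0r.
rewrite (_ : (fun t => _) = (fun _ => 1)) ?character_cst => [/eqP|]; first by rewrite oner_eq0.
by apply/funext => t; rewrite mulc_conj -rmorphM mulfV.
Qed.

Lemma character_eval : compact [set: G] -> exists t0, forall f, ccont f -> chi f = f t0.
Proof.
(* t0 is a cluster point of the sets {|h| < e}, h in ker chi: they form a
   filter base since |h1|^2 + |h2|^2 is again in ker chi. *)
move=> cG; have [chiD chiZ chiM chiJ chi1] := chiP.
pose D := [set p : (G -> C) * Rr | [/\ ccont p.1, chi p.1 = 0 & 0 < p.2]].
pose B (p : (G -> C) * Rr) := [set t | normc (p.1 t) < p.2].
pose F := filter_from D B.
have FF : ProperFilter F.
  apply: filter_from_proper; last by move=> [h e] [/= ch chih e0]; exact: character_ker_small.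
  apply: filter_from_filter.
    by exists (fun _ => 0, 1); split=> //=; [exact: ccont_cst | exact: character_cst].
  move=> [h1 e1] [h2 e2] [/= ch1 chih1 e10] [/= ch2 chih2 e20].
  pose m := Num.min e1 e2; have m0 : 0 < m by rewrite lt_min e10 e20.
  have [c1 c2] := (ccontM ch1 (ccontJ ch1), ccontM ch2 (ccontJ ch2)).
  exists (fun t => h1 t * conjc (h1 t) + h2 t * conjc (h2 t), m * m).
    split=> /=; [exact: ccontD | | exact: mulr_gt0].
    by rewrite chiD // !chiM ?chih1 ?chih2 ?mul0r ?addr0 //; exact: ccontJ.
  move=> t; rewrite /B /= !mulc_conj -rmorphD normc_real ger0_norm ?addr_ge0 ?sqr_ge0 //.
  have := normc_ge0 (h1 t); have := normc_ge0 (h2 t).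
  have : m <= e1 by rewrite ge_min lexx. have : m <= e2 by rewrite ge_min lexx orbT.
  by move=> *; split; nra.
have [t0 [_ clt0]] := cG F FF filterT.
exists t0 => f cf; pose h t := f t - chi f.
have ch : ccont h by apply: ccontD cf (ccont_cst _).
have chih : chi h = 0 by rewrite /h chiD ?character_cst ?subrr //; exact: ccont_cst.
suff : normc (h t0) = 0.
  by move/ComplexField.Normc.eq0_normc/eqP; rewrite subr_eq0 => /eqP ->.
apply/eqP; rewrite eq_le normc_ge0 andbT; apply/ler_addgt0Pr => e e0; rewrite add0r.
have e2 : 0 < e / 2 by rewrite divr_gt0.
have Fh : F (B (h, e / 2)) by exists (h, e / 2).
have [t [ht ht0]] := clt0 _ _ Fh (ch t0 _ e2).
have := normc_sub_tri (h t0) 0 (h t); rewrite subr0 normcB sub0r normcN.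
by move: ht ht0; rewrite /B /=; lra.
Qed.

End Characters.

Lemma ccont_urysohn (G : topologicalType) (t0 : G) (U : set G) :
  hausdorff_space G -> compact [set: G] -> nbhs t0 U ->
  exists f : G -> C, [/\ ccont f, f t0 = 0 & forall t, ~ U t -> f t = 1].
Proof.
move=> hG cG nU.
have creg := @normal_completely_regular Rr G (compact_normal hG cG) (hausdorff_accessible hG).
have clU : closed (~` U°) by apply: open_closedC; exact: open_interior.
have nUt0 : ~ (~` U°) t0 by move/(_ nU).
have := creg t0 _ clU nUt0.
move=> /(@uniform_separatorP G Rr) [f [cf _ f0 f1]].
exists (fun t => (f t)%:C); split; first exact: ccont_real.
  by rewrite (f0 (f t0)) //; exists t0.
by move=> t nUt; rewrite (f1 (f t)) //; exists t => // /interior_subset.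
Qed.

Lemma ccont_separates (G : topologicalType) (t t' : G) :
  hausdorff_space G -> compact [set: G] -> (forall f, ccont f -> f t = f t') -> t = t'.
Proof.
move=> hG cG ftt'; apply: contrapT => tt'.
have cl : closed [set t'] by apply: accessible_closed_set1; exact: hausdorff_accessible.
have nU : nbhs t (~` [set t']).
  by apply: open_nbhs_nbhs; split; [exact: closed_openC | exact: tt'].
have [f [cf ft ft']] := ccont_urysohn hG cG nU.
have := ftt' f cf; rewrite ft ft' => [/eqP|]; first by rewrite eq_sym oner_eq0.
by move=> /= /(_ erefl).
Qed.

Definition equivariant_map (G X : Type) (L : group_law G) (a : group_action L X)
  (th : X -> G) : Prop := forall g x, th (act a g x) = gmul L g (th x).

Section EquivariantMaps.
Context {G X : topologicalType} {L : group_law G} {a : group_action L X}.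
Hypotheses (cGrp : compact_group L) (cact : continuous (fun p : G * X => act a p.1 p.2)).

Lemma equivariant_map_of_characters (psi : (G -> C) -> X -> C) :
  (forall f, ccont f -> ccont (psi f)) -> (forall x, is_character (fun f => psi f x)) ->
  (forall g f x, ccont f -> psi (Lt L g f) x = psi f (act a (ginv L g) x)) ->
  exists th : X -> G, continuous th /\ equivariant_map a th.
Proof.
have [hG cG _ _] := cGrp.
move=> psiC psi_char psiE.
have /choice[th psi_th] : forall x, exists t : G, forall f, ccont f -> psi f x = f t.
  by move=> x; exact: character_eval (psi_char x) cG.
exists th; split=> [x0 U nU|g x].
  have [f [cf f0 f1]] := ccont_urysohn hG cG nU.
  apply: filterS (psiC f cf x0 _ ltr01) => x; rewrite !psi_th // f0 subr0.
  by apply: contraPP => /f1 ->; rewrite ComplexField.Normc.normc1 ltxx.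
apply: ccont_separates hG cG _ => f cf.
rewrite -psi_th // -[g in act a g x](ginvK L) -psiE // psi_th; last exact: ccont_Lt.
by rewrite /Lt ginvK.
Qed.

Local Notation Q := (orbit_space a).

Lemma trivialization_of_equivariant_map th : continuous th -> equivariant_map a th ->
  exists sigma : Q * G -> X, homeomorphism sigma /\
    forall g h x, act a g (sigma (\pi_Q x, h)) = sigma (\pi_Q x, gmul L g h).
Proof.
(* s x is the point of the orbit of x at which th takes the value 1. *)
move=> cth thE; pose s x := act a (ginv L (th x)) x.
have cs : continuous s.
  apply: (continuous_comp2 (f := fun x => ginv L (th x)) (g := id) cact) => x; last exact: cvg_id.
  by apply: (continuous_comp (cth x)); exact: continuous_ginv.
have sE g x : s (act a g x) = s x by rewrite /s thE ginvM actM actK.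
have piP x y : \pi_Q x = \pi_Q y -> exists g, act a g x = y by move/eqmodP/asboolP.
have piA g y : \pi_Q (act a g y) = \pi_Q y.
  by apply/eqmodP/asboolP; exists (ginv L g); exact: actK.
have cs_repr : continuous (s \o repr : Q -> X).
  by apply: repr_comp_continuous cs _ => x y /eqP/piP[g <-]; rewrite sE.
exists (fun p => act a p.2 (s (repr p.1))); split=> [|g h x]; last by rewrite /= actM.
split.
  apply: (continuous_comp2 (f := snd) (g := fun p : Q * G => s (repr p.1)) cact) => p.
    exact: cvg_snd.
  exact: continuous_comp cvg_fst (cs_repr _).
exists (fun x => (\pi_Q x, th x)); split.
- by apply: continuous_pair cth; exact: pi_continuous.
- case=> q h /=; congr (_, _); first by rewrite piA /s piA reprK.
  by rewrite thE /s thE gmulV gmulr1.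
- move=> x /=; have [g gx] := piP _ _ (reprK (\pi_Q x)).
  have -> : s (repr (\pi_Q x)) = s x by rewrite -{2}gx sE.
  by rewrite /s actKV.
Qed.

Lemma equivariant_map_of_trivialization (sigma : Q * G -> X) : homeomorphism sigma ->
  (forall g h x, act a g (sigma (\pi_Q x, h)) = sigma (\pi_Q x, gmul L g h)) ->
  exists th : X -> G, continuous th /\ equivariant_map a th.
Proof.
move=> [_ [tau [ctau sigmaK tauK]]] sigmaE.
exists (fun x => (tau x).2); split=> [x|g x]; first exact: continuous_comp (ctau x) (cvg_snd).
rewrite -{1}(tauK x); case: (tau x) => q h /=.
by rewrite -(reprK q) sigmaE sigmaK.
Qed.

Lemma rokhlin_of_equivariant_map th : continuous th -> equivariant_map a th -> rokhlin a.
Proof.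
move=> cth thE; have [_ cG cmul _] := cGrp.
have alphaE g (f : G -> C) x : alpha a g (fun y => f (th y)) x = Lt L g f (th x).
  by rewrite /alpha /Lt thE.
exists (fun f n x => f (th x)) => f f' cf cf'.
have linf : linf_CX (fun n x => f (th x)).
  have [M fM] := ccont_bounded cG cf.
  by split=> [n|]; [exact: ccont_comp cth cf | exists M => n x; exact: fM].
have null0 u : (forall n x, u n x = 0) -> null_CX u.
  by move=> u0 e e0; exists 0%N => n _ x; rewrite u0 ComplexField.Normc.normc0.
split=> //; split.
  exists (fun n x => f (th x)); split=> //; last by apply: null0 => n x; rewrite subrr.
  have cfL : ccont (fun p : G * G => f (gmul L (ginv L p.2) p.1)).
    exact: ccont_comp (continuous_act_inv (a := left_action L) cGrp cmul) cf.
  move=> g0 e e0; apply: filterS (ccont_unif_compact cG cfL g0 e0) => g fg n x.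
  by rewrite !alphaE; exact: fg.
split; first by move=> b _; apply: null0 => n x; rewrite mulrC subrr.
split; first by apply: null0 => n x; rewrite subrr.
split; first by move=> z; apply: null0 => n x; rewrite subrr.
do 3 (split; first by apply: null0 => n x; rewrite subrr).
by move=> g; apply: null0 => n x; rewrite alphaE subrr.
Qed.

End EquivariantMaps.

Theorem theorem4p12 (G X : topologicalType) (L : group_law G)
  (a : group_action L X) :
  compact_group L -> @second_countable G ->
  hausdorff_space X -> compact [set: X] ->
  continuous (fun p : G * X => act a p.1 p.2) ->
  weakly_equiv_semiprojective_comm L ->
  rokhlin a <->
  exists sigma : orbit_space a * G -> X,
    homeomorphism sigma /\
    forall (g h : G) (x : X),
      act a g (sigma (\pi_(orbit_space a) x, h)) =
      sigma (\pi_(orbit_space a) x, gmul L g h).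
Proof.
move=> cGrp _ _ cX cact wsp; split=> [rk|[sigma [hsigma sigmaE]]].
  have [psi [psiC psi_char psiE]] := rokhlin_equivariant_characters cGrp cX cact wsp rk.
  have [th [cth thE]] := equivariant_map_of_characters cGrp psiC psi_char psiE.
  exact (trivialization_of_equivariant_map cGrp cact cth thE).
have [th [cth thE]] := equivariant_map_of_trivialization hsigma sigmaE.
exact (rokhlin_of_equivariant_map cGrp cth thE).
Qed.
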